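(* Let $P=\{x\in\mathbb{R}^n: Ax\le b,\ 0\le x_i\le u_i \text{ for } i\in I\}$ be a rational polyhedron with $I=\{1,\dots,l\}$ and positive integers $u_i$, let $P^I=\{x\in P: x_i\in\mathbb{Z}\text{ for } i\in I\}$, and let $\mathcal{B}=(B^1,\dots,B^l)$ be a binarization scheme in which each $B^i\in\Gamma^{u_i}_{u_i}$ is a unimodular binarization polytope. Then \[\operatorname{proj}_x\big(\mathrm{SC}^q(P_{\mathcal{B}},I_{\mathcal{B}})\big)=\mathrm{conv}(P^I),\qquad\text{where } q=\sum_{i=1}^l\lceil\log_2(u_i+1)\rceil.\]
   Context: For positive integers $q,u$, $\Gamma^q_u$ is the set of rational polytopes $B\subseteq\{(x,z)\in\mathbb{R}\times[0,1]^q:0\le x\le u\}$ with $\operatorname{proj}_x(B\cap(\mathbb{R}\times\{0,1\}^q))=\{0,1,\dots,u\}$. $B$ is perfect if for each $x\in\{0,\dots,u\}$ there is a unique $z\in\{0,1\}^q$ with $(x,z)\in B$, and $B=\mathrm{conv}(B\cap(\mathbb{R}\times\{0,1\}^q))$. A perfect $B\in\Gamma^u_u$, $B=\mathrm{conv}\{(j,w^j):j=0,\dots,u\}$ with $w^j\in\{0,1\}^u$, is unimodular if the matrix with columns $w^j-w^0$ ($j=1,\dots,u$) is integral with determinant $\pm1$. With $p=\sum_iu_i$, $P_{\mathcal{B}}=\{(x,z)\in\mathbb{R}^n\times\mathbb{R}^p: x\in P,\ (x_i,z_i)\in B^i\text{ for } i\in I\}$, $z=(z_1,\dots,z_l)$,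 $z_i\in\mathbb{R}^{u_i}$, and $I_{\mathcal{B}}=\{1,\dots,l,n+1,\dots,n+p\}$. Split closure: for $J\subseteq\{1,\dots,N\}$ and $X\subseteq\mathbb{R}^N$, $\mathrm{SC}(X,J)=\bigcap\mathrm{conv}(X\setminus S)$ over all $S=\{y:\pi_0<\pi^Ty<\pi_0+1\}$ with $\pi\in\mathbb{Z}^N$, $\pi_j=0$ for $j\notin J$, $\pi_0\in\mathbb{Z}$; $\mathrm{SC}^1=\mathrm{SC}$ and $\mathrm{SC}^k(X,J)=\mathrm{SC}(\mathrm{SC}^{k-1}(X,J),J)$. *)

From HB Require Import structures.
From mathcomp Require Import all_boot all_order all_algebra.
From mathcomp Require Import classical_sets reals.
Set Implicit Arguments. Unset Strict Implicit. Unset Printing Implicit Defensive.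
Import Order.TTheory GRing.Theory Num.Theory.
Local Open Scope classical_set_scope.
Local Open Scope ring_scope.

Section Defs.
Variable R : realType.

Definition conv (N : nat) (X : set 'rV[R]_N) : set 'rV[R]_N :=
  [set x | exists (k : nat) (pts : 'I_k -> 'rV[R]_N) (lam : 'I_k -> R),
      [/\ (forall i, X (pts i)), (forall i, 0 <= lam i),
          \sum_(i < k) lam i = 1 & x = \sum_(i < k) lam i *: pts i]].

Definition split_set (N : nat) (pi : 'rV[int]_N) (pi0 : int) : set 'rV[R]_N :=
  [set y | (pi0%:~R < \sum_(j < N) (pi 0 j)%:~R * y 0 j)
           /\ (\sum_(j < N) (pi 0 j)%:~R * y 0 j < (pi0 + 1)%:~R)].

Definition SC (N : nat) (J : set 'I_N) (X : set 'rV[R]_N) : set 'rV[R]_N :=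
  [set y | forall (pi : 'rV[int]_N) (pi0 : int),
     (forall j, ~ J j -> pi 0 j = 0) -> conv (X `\` split_set pi pi0) y].

Definition SCk (N : nat) (k : nat) (X : set 'rV[R]_N) (J : set 'I_N) :=
  iter k (SC J) X.

Definition binary_vec (q : nat) (z : 'rV[R]_q) : Prop :=
  forall k, z 0 k = 0 \/ z 0 k = 1.

Definition pt (q : nat) (x : R) (z : 'rV[R]_q) : 'rV[R]_(1 + q) :=
  row_mx (\row_(_ < 1) x) z.

Definition xcoord (q : nat) (y : 'rV[R]_(1 + q)) : R := (lsubmx y) 0 0.
Definition zpart (q : nat) (y : 'rV[R]_(1 + q)) : 'rV[R]_q := rsubmx y.

Definition rational_polytope (N : nat) (B : set 'rV[R]_N) : Prop :=
  exists (k : nat) (pts : 'I_k -> 'rV[rat]_N),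
    B = conv (range (fun i => map_mx (@ratr R) (pts i))).

Definition Gamma (q u : nat) (B : set 'rV[R]_(1 + q)) : Prop :=
  [/\ rational_polytope B,
      (forall y, B y -> 0 <= xcoord y <= u%:R /\
                        forall k, 0 <= zpart y 0 k <= 1) &
      [set xcoord y | y in B `&` [set y | binary_vec (zpart y)]]
        = [set x | exists j : nat, (j <= u)%N /\ x = j%:R]].

Definition perfect (q u : nat) (B : set 'rV[R]_(1 + q)) : Prop :=
  (forall j : nat, (j <= u)%N ->
     exists! z : 'rV[R]_q, binary_vec z /\ B (pt j%:R z)) /\
  B = conv (B `&` [set y | binary_vec (zpart y)]).

Definition unimodular (u : nat) (B : set 'rV[R]_(1 + u)) : Prop :=
  [/\ @Gamma u u B, @perfect u u B &
      exists w : 'I_u.+1 -> 'rV[int]_u,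
        [/\ (forall j k, w j 0 k = 0 \/ w j 0 k = 1),
            B = conv (range (fun j : 'I_u.+1 =>
                               pt (j : nat)%:R (map_mx intr (w j)))) &
            let M := \matrix_(k < u, j < u) (w (lift ord0 j) 0 k - w ord0 0 k) in
            \det M = 1 \/ \det M = -1]].

Definition rv_nth (N : nat) (y : 'rV[R]_N) (k : nat) : R :=
  match (insub k : option 'I_N) with Some i => y 0 i | None => 0 end.

Definition polyP (n m l : nat) (hl : (l <= n)%N) (A : 'M[rat]_(m, n))
  (b : 'cV[rat]_m) (u : 'I_l -> nat) : set 'rV[R]_n :=
  [set x | (forall r, \sum_(j < n) ratr (A r j) * x 0 j <= ratr (b r 0)) /\
           (forall i : 'I_l, 0 <= x 0 (widen_ord hl i) <= (u i)%:R)].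

Definition polyPI (n m l : nat) (hl : (l <= n)%N) (A : 'M[rat]_(m, n))
  (b : 'cV[rat]_m) (u : 'I_l -> nat) : set 'rV[R]_n :=
  [set x | polyP hl A b u x /\
           forall i : 'I_l, exists z : int, x 0 (widen_ord hl i) = z%:~R].

(* offset of block z_i inside z *)
Definition offset (l : nat) (u : 'I_l -> nat) (i : 'I_l) : nat :=
  (\sum_(j < l | (j < i)%N) u j)%N.

Definition zblock (l N : nat) (u : 'I_l -> nat) (n : nat)
  (y : 'rV[R]_N) (i : 'I_l) : 'rV[R]_(u i) :=
  \row_(k < u i) rv_nth y (n + offset u i + k).

Definition polyPB (n m l : nat) (hl : (l <= n)%N) (A : 'M[rat]_(m, n))
  (b : 'cV[rat]_m) (u : 'I_l -> nat)
  (B : forall i : 'I_l, set 'rV[R]_(1 + u i)) :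
  set 'rV[R]_(n + \sum_(i < l) u i) :=
  [set y | polyP hl A b u (lsubmx y) /\
           forall i : 'I_l,
             B i (pt ((lsubmx y) 0 (widen_ord hl i)) (zblock u n y i))].

Definition IB (n l : nat) (u : 'I_l -> nat) : set 'I_(n + \sum_(i < l) u i) :=
  [set j | (j < l)%N \/ (n <= j)%N].

End Defs.

From Pilot Require Import Defs.
From HB Require Import structures.
From mathcomp Require Import all_boot all_order all_algebra.
From mathcomp Require Import classical_sets reals boolp.
From mathcomp Require Import ring lra zify.
Set Implicit Arguments. Unset Strict Implicit. Unset Printing Implicit Defensive.
Import Order.TTheory GRing.Theory Num.Theory.
Local Open Scope classical_set_scope.
Local Open Scope ring_scope.

(* Write B^i = conv {(j, w^j)}.  Since the edge matrix [w^1 - w^0, ..., w^u - w^0]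
   is unimodular, the barycentric coordinates lambda_1, ..., lambda_u of a point
   (x, z) of B^i are affine in z with integral coefficients; they are nonnegative
   with sum at most 1, and x = sum_j j lambda_j.  Hence every partial sum
   sum_(m < j <= c) lambda_j is an integral split direction on the z-variables with
   values in [0, 1] on P_B, and splitting on it cuts the admissible range [a, c]
   of x_i into [a, m] and [m + 1, c].  After ceil(log2(u_i + 1)) such bisections
   per coordinate every x_i is an integer, so the projection lies in conv(P^I).
   Conversely each point of P^I lifts to a point of P_B that is integral on I_B;
   such a point lies in no split set, so it survives every round. *)

Section ConvexHull.
Variables (R : realType) (N : nat).
Implicit Types (X Y G : set 'rV[R]_N) (h : 'rV[R]_N -> R).

Definition is_convex G := forall a b (t : R), 0 <= t <= 1 -> G a -> G b ->
  G (t *: a + (1 - t) *: b).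

Lemma sub_conv X : X `<=` conv X.
Proof.
move=> x Xx; exists 1%N, (fun=> x), (fun=> 1); split => //.
- by rewrite big_ord1.
- by rewrite big_ord1 scale1r.
Qed.

Lemma conv_subset X Y : X `<=` Y -> conv X `<=` conv Y.
Proof.
move=> XY x [k [p [lam [Xp lam_ge0 lam_sum ->]]]].
by exists k, p, lam; split => // i; apply: XY.
Qed.

Lemma conv_convex X : is_convex (conv X).
Proof.
move=> a b t /andP[t0 t1] [k1 [p1 [l1 [X1 L1 S1 ->]]]] [k2 [p2 [l2 [X2 L2 S2 ->]]]].
exists (k1 + k2)%N,
  (fun i => match split i with inl i1 => p1 i1 | inr i2 => p2 i2 end),
  (fun i => match split i with inl i1 => t * l1 i1 | inr i2 => (1 - t) * l2 i2 end).
have sl (i : 'I_k1) : @split k1 k2 (lshift k2 i) = inl i := unsplitK (inl i).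
have sr (i : 'I_k2) : @split k1 k2 (rshift k1 i) = inr i := unsplitK (inr i).
split.
- by move=> i; case: (split i).
- by move=> i; case: (split i) => c; apply: mulr_ge0 => //; lra.
- rewrite big_split_ord /=.
  under eq_bigr do rewrite sl.
  under [X in _ + X]eq_bigr do rewrite sr.
  by rewrite -!mulr_sumr S1 S2 !mulr1; lra.
- rewrite big_split_ord /= !scaler_sumr.
  by congr (_ + _); apply: eq_bigr => i _; rewrite ?sl ?sr scalerA.
Qed.

Lemma conv_sub_convex X G : is_convex G -> X `<=` G -> conv X `<=` G.
Proof.
move=> cG XG x [k [p [lam [Xp L S ->]]]].
elim: k p lam Xp L S => [|k IH] p lam Xp L S.
  by move: S; rewrite big_ord0 => /eqP; rewrite eq_sym oner_eq0.
rewrite big_ord_recl; rewrite big_ord_recl in S.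
set s := \sum_(i < k) lam (lift ord0 i) in S *.
have s_ge0 : 0 <= s by apply: sumr_ge0.
have [s0|s_neq0] := eqVneq s 0.
  have lamS0 := psumr_eq0P (fun i _ => L (lift ord0 i)) s0.
  rewrite big1 ?addr0; last by move=> i _; rewrite lamS0 // scale0r.
  have -> : lam ord0 = 1 by lra.
  by rewrite scale1r; apply: XG.
have -> : \sum_(i < k) lam (lift ord0 i) *: p (lift ord0 i) =
   (1 - lam ord0) *: \sum_(i < k) (lam (lift ord0 i) / s) *: p (lift ord0 i).
  rewrite scaler_sumr; apply: eq_bigr => i _; rewrite scalerA.
  have -> : 1 - lam ord0 = s by lra.
  by rewrite mulrCA divff // mulr1.
apply: cG; first (apply/andP; split; [exact: L | lra]).
- exact: XG.
- apply: IH => [i|i|]; first exact: Xp.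
  + by apply: divr_ge0.
  + by rewrite -mulr_suml divff.
Qed.

Definition affine h := forall k (p : 'I_k -> 'rV[R]_N) (lam : 'I_k -> R),
  \sum_(i < k) lam i = 1 -> h (\sum_(i < k) lam i *: p i) = \sum_(i < k) lam i * h (p i).

Lemma affine_ge0_conv h X : affine h -> (forall p, X p -> 0 <= h p) ->
  forall p, conv X p -> 0 <= h p.
Proof.
move=> ah hX p [k [q [lam [Xq L S ->]]]]; rewrite ah //.
by apply: sumr_ge0 => i _; apply: mulr_ge0 => //; apply: hX.
Qed.

Lemma affine_eq_conv h X c : affine h -> (forall p, X p -> h p = c) ->
  forall p, conv X p -> h p = c.
Proof.
move=> ah hX p [k [q [lam [Xq L S ->]]]]; rewrite ah //.
by under eq_bigr do rewrite hX //; rewrite -mulr_suml S mul1r.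
Qed.

Lemma eq_affine h1 h2 : h1 =1 h2 -> affine h1 -> affine h2.
Proof. by move=> E a k p lam S; rewrite -E a //; apply: eq_bigr => i _; rewrite E. Qed.

Lemma affine_cst c : affine (fun=> c).
Proof. by move=> k p lam S; rewrite -mulr_suml S mul1r. Qed.

Lemma affine_coord j : affine (fun p => p 0 j).
Proof. by move=> k p lam S; rewrite summxE; apply: eq_bigr => i _; rewrite mxE. Qed.

Lemma affine_rv_nth t : affine (fun p => rv_nth p t).
Proof. by rewrite /rv_nth; case: insub => [j|]; [exact: affine_coord | exact: affine_cst]. Qed.

Lemma affineB h1 h2 : affine h1 -> affine h2 -> affine (fun p => h1 p - h2 p).
Proof.
move=> a1 a2 k p lam S; rewrite a1 // a2 // -sumrB.
by apply: eq_bigr => i _; rewrite mulrBr.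
Qed.

Lemma affineMl c h : affine h -> affine (fun p => c * h p).
Proof. by move=> a k p lam S; rewrite a // mulr_sumr; apply: eq_bigr => i _; rewrite mulrCA. Qed.

Lemma affine_sum (I : finType) (P : pred I) (h : I -> 'rV[R]_N -> R) :
  (forall i, affine (h i)) -> affine (fun p => \sum_(i | P i) h i p).
Proof.
move=> a k p lam S; under eq_bigr do rewrite a //.
by rewrite exchange_big /=; apply: eq_bigr => i _; rewrite mulr_sumr.
Qed.

Variable J : set 'I_N.

Lemma SC_subset X Y : X `<=` Y -> SC J X `<=` SC J Y.
Proof.
move=> XY y Xy pi pi0 Jpi; apply: conv_subset (Xy pi pi0 Jpi).
by move=> x [Xx notSx]; split => //; apply: XY.
Qed.

Lemma SC_sub_conv X : SC J X `<=` conv X.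
Proof.
move=> y Xy; have := Xy 0 0 (fun _ _ => mxE _ _ _ _).
by apply: conv_subset => x [].
Qed.

Lemma SC_convex X : is_convex (SC J X).
Proof. by move=> a b t t01 Xa Xb pi pi0 Jpi; apply: conv_convex; [| exact: Xa | exact: Xb]. Qed.

Lemma SCk_subset k X Y : X `<=` Y -> SCk k X J `<=` SCk k Y J.
Proof. by elim: k => [//|k IH] XY /=; apply/SC_subset/IH. Qed.

Lemma SCk_sub_convex k X G : is_convex G -> X `<=` G -> SCk k X J `<=` G.
Proof.
move=> cG XG; elim: k => [//|k IH] /= y /SC_sub_conv.
exact: conv_sub_convex.
Qed.

Lemma SCk_sub_conv k X : SCk k X J `<=` conv X.
Proof. by apply: SCk_sub_convex; [exact: conv_convex | exact: sub_conv]. Qed.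

Lemma SCk_convex k X : is_convex X -> is_convex (SCk k X J).
Proof. by case: k => [//|k] _; apply: SC_convex. Qed.

Lemma SC_face h X : affine h -> (forall p, X p -> 0 <= h p) ->
  SC J X `&` [set p | h p = 0] `<=` SC J (X `&` [set p | h p = 0]).
Proof.
move=> ah hX y [Xy hy] pi pi0 Jpi.
have [k [p [lam [Xp L S E]]]] := Xy pi pi0 Jpi.
have lam_h0 i : lam i * h (p i) = 0.
  have sum0 : \sum_(i < k) lam i * h (p i) = 0 by rewrite -ah // -E.
  apply: (psumr_eq0P _ sum0) => // j _.
  by apply: mulr_ge0 => //; apply: hX; case: (Xp j).
have [i0 lam_i0] : exists i0, lam i0 != 0.
  apply/existsP; apply: contraT; rewrite negb_exists => /forallP lam0.
  move: S; rewrite big1 => [/eqP|j _]; first by rewrite eq_sym oner_eq0.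
  by have /negPn/eqP := lam0 j.
have face i : lam i != 0 -> h (p i) = 0.
  by move=> lam_i; have /eqP := lam_h0 i; rewrite mulf_eq0 (negbTE lam_i) => /eqP.
(* points with zero weight are moved to the face without changing the combination *)
exists k, (fun i => if lam i == 0 then p i0 else p i), lam; split => //.
- move=> i; case: eqP => [_|/eqP lam_i].
  + by have [? ?] := Xp i0; do !split => //; apply: face.
  + by have [? ?] := Xp i; do !split => //; apply: face.
- by rewrite E; apply: eq_bigr => i _; case: eqP => // ->; rewrite !scale0r.
Qed.

Lemma SCk_face h X k : affine h -> (forall p, X p -> 0 <= h p) ->
  SCk k X J `&` [set p | h p = 0] `<=` SCk k (X `&` [set p | h p = 0]) J.
Proof.
move=> ah hX; elim: k => [//|k IH] y /= yface.
apply: (SC_subset IH); apply: SC_face yface => //.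
by move=> p /SCk_sub_conv; apply: affine_ge0_conv.
Qed.

Lemma int_notin_split (y : 'rV[R]_N) (pi : 'rV[int]_N) pi0 :
  (forall t, J t -> y 0 t \is a Num.int) -> (forall t, ~ J t -> pi 0 t = 0) ->
  ~ split_set pi pi0 y.
Proof.
move=> y_int Jpi [lo hi].
have /intrP [z Ez] : \sum_(t < N) (pi 0 t)%:~R * y 0 t \is a Num.int.
  apply: rpred_sum => t _; have [Jt|nJt] := pselect (J t).
    by rewrite rpredM ?intr_int ?y_int.
  by rewrite Jpi // mul0r rpred0.
by move: lo hi; rewrite Ez !ltr_int; lia.
Qed.

Lemma int_in_SCk k X (y : 'rV[R]_N) :
  (forall t, J t -> y 0 t \is a Num.int) -> X y -> SCk k X J y.
Proof.
move=> y_int Xy; elim: k => [//|k IH] /= pi pi0 Jpi.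
by apply: sub_conv; split => //; apply: int_notin_split.
Qed.

End ConvexHull.

Section Barycentric.
Variables (R : realType) (u : nat) (w : 'I_u.+1 -> 'rV[int]_u).

Definition vertex (j : 'I_u.+1) : 'rV[R]_(1 + u) := pt (j : nat)%:R (map_mx intr (w j)).

Definition edge_mx : 'M[int]_u := \matrix_(k < u, j < u) (w (lift ord0 j) 0 k - w ord0 0 k).

Definition bary_mx : 'M[int]_u := invmx edge_mx^T.

(* [bary p j] is the weight of vertex [j.+1] when [p] is an affine combination of
   the vertices.  Over [int], [invmx] is the true inverse only for unimodular
   [edge_mx] (otherwise it is junk); the hypothesis is introduced below. *)
Definition bary (p : 'rV[R]_(1 + u)) (j : 'I_u) : R :=
  \sum_(k < u) (bary_mx k j)%:~R * (rsubmx p 0 k - (w ord0 0 k)%:~R).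

Lemma affine_bary j : affine (bary ^~ j).
Proof.
apply: affine_sum => k; apply: affineMl; apply: affineB; last exact: affine_cst.
by apply: (@eq_affine _ _ (fun p => p 0 (rshift 1 k))) => [p|]; [rewrite mxE | apply: affine_coord].
Qed.

Hypothesis edge_mx_unimodular : \det edge_mx = 1 \/ \det edge_mx = -1.

Lemma bary_vertex j j' : bary (vertex j) j' = (j == lift ord0 j')%:R.
Proof.
have edge_inv : edge_mx^T *m bary_mx = 1%:M.
  apply: mulmxV; rewrite unitmxE det_tr.
  by case: edge_mx_unimodular => ->; rewrite ?unitrN1 ?unitr1.
have -> : bary (vertex j) j' = (((w j - w ord0) *m bary_mx) 0 j')%:~R.
  rewrite /bary /vertex /pt row_mxKr mxE rmorph_sum; apply: eq_bigr => k _.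
  by rewrite !mxE rmorphM rmorphB mulrC.
case: (unliftP ord0 j) => [j1 ->|->]; last by rewrite subrr mul0mx mxE (negbTE (neq_lift _ _)).
have -> : w (lift ord0 j1) - w ord0 = row j1 edge_mx^T by apply/rowP => k; rewrite !mxE.
by rewrite -row_mul edge_inv !mxE (inj_eq lift_inj); case: eqP.
Qed.

Lemma bary_ge0 p j : conv (range vertex) p -> 0 <= bary p j.
Proof.
apply: (affine_ge0_conv (affine_bary j)) => _ [v _ <-].
by rewrite bary_vertex ler0n.
Qed.

Lemma bary_vertex_sum j : \sum_(j' < u) bary (vertex j) j' = (j != ord0)%:R.
Proof.
case: (unliftP ord0 j) => [j1 ->|->]; last first.
  by rewrite big1 // => j' _; rewrite bary_vertex (negbTE (neq_lift _ _)).
rewrite (bigD1 j1) //= big1 => [|j' /negPf ne]; last first.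
  by rewrite bary_vertex (inj_eq lift_inj) eq_sym ne.
by rewrite bary_vertex eqxx addr0.
Qed.

Lemma bary_sum_le1 p : conv (range vertex) p -> \sum_(j < u) bary p j <= 1.
Proof.
move=> Vp; rewrite -subr_ge0.
apply: (affine_ge0_conv (h := fun p => 1 - \sum_(j < u) bary p j) _ _ Vp) => [|_ [v _ <-]].
  by apply: affineB; [exact: affine_cst | apply: affine_sum => j; exact: affine_bary].
by rewrite bary_vertex_sum subr_ge0; case: (_ != _).
Qed.

Lemma xcoord_bary p : conv (range vertex) p ->
  xcoord p = \sum_(j < u) (j.+1)%:R * bary p j.
Proof.
move=> Vp; apply/eqP; rewrite -subr_eq0; apply/eqP.
apply: (affine_eq_conv (h := fun p => xcoord p - \sum_(j < u) (j.+1)%:R * bary p j) _ _ Vp)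
  => [|_ [v _ <-]].
  apply: affineB; last by apply: affine_sum => j; apply/affineMl/affine_bary.
  apply: (@eq_affine _ _ (fun q => q 0 (lshift u 0))) => [q|]; last exact: affine_coord.
  by rewrite /xcoord mxE.
rewrite /xcoord /vertex /pt row_mxKl mxE.
case: (unliftP ord0 v) => [j1 ->|->].
  rewrite (bigD1 j1) //= big1 => [|j /negPf ne]; last first.
    by rewrite bary_vertex (inj_eq lift_inj) eq_sym ne mulr0.
  by rewrite bary_vertex eqxx mulr1 addr0 subrr.
by rewrite big1 ?subrr // => j _; rewrite bary_vertex (negbTE (neq_lift _ _)) mulr0.
Qed.

End Barycentric.

Arguments vertex {R u} w j.

Lemma unimodular_vertices (R : realType) u (B : set 'rV[R]_(1 + u)) : unimodular B ->
  exists w, B = conv (range (vertex w)) /\ (\det (edge_mx w) = 1 \/ \det (edge_mx w) = -1).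
Proof. by case=> _ _ [w [_ EB det_w]]; exists w. Qed.

Lemma sum_eta_update (I : finType) (e : I -> nat) i0 v :
  (\sum_i [eta e with i0 |-> v] i + e i0 = \sum_i e i + v)%N.
Proof.
rewrite (bigD1 i0) //= [in RHS](bigD1 i0) //= eqxx.
have -> : (\sum_(i | i != i0) [eta e with i0 |-> v] i = \sum_(i | i != i0) e i)%N.
  by apply: eq_bigr => i /negbTE /= ->.
lia.
Qed.

Section BlockIndexing.
Variables (l : nat) (u : 'I_l -> nat).

Lemma offset_add_le (i : 'I_l) (P : pred 'I_l) :
  (forall j : 'I_l, (j <= i)%N -> P j) ->
  (offset u i + u i <= \sum_(j < l | P j) u j)%N.
Proof.
move=> leP; have -> : (offset u i + u i = \sum_(j < l | (j <= i)%N) u j)%N.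
  rewrite [RHS](bigD1 i) //= addnC /offset; congr (_ + _)%N.
  by apply: eq_bigl => j; rewrite ltn_neqAle andbC.
rewrite big_mkcond [X in (_ <= X)%N]big_mkcond /=; apply: leq_sum => j _.
by case: ifP => // /leP ->.
Qed.

Lemma offset_add_le_sum (i : 'I_l) : (offset u i + u i <= \sum_(j < l) u j)%N.
Proof. exact: offset_add_le. Qed.

Lemma offset_add_le_offset (i i' : 'I_l) : (i < i')%N -> (offset u i + u i <= offset u i')%N.
Proof. by move=> lt_ii'; apply: offset_add_le => j le_ji; apply: leq_ltn_trans lt_ii'. Qed.

Definition concat_blocks (v : forall i, 'rV[int]_(u i)) (t : nat) : int :=
  \sum_(i < l) \sum_(k < u i) (if t == (offset u i + k)%N then v i 0 k else 0).

Lemma concat_blocksE v i (k : 'I_(u i)) : concat_blocks v (offset u i + k) = v i 0 k.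
Proof.
rewrite /concat_blocks (bigD1 i) //= [X in _ + X]big1 ?addr0 => [|i' ne_i'i].
  rewrite (bigD1 k) //= eqxx [X in _ + X]big1 ?addr0 // => k' ne_k'k.
  by rewrite eqn_add2l eq_sym -[(k' : nat) == k]/(k' == k) (negbTE ne_k'k).
apply: big1 => k' _; case: eqP => // E; case: (ltngtP i i') => [lt|lt|eq].
- by have := offset_add_le_offset lt; have := ltn_ord k; lia.
- by have := offset_add_le_offset lt; have := ltn_ord k'; lia.
- by move/eqP: ne_i'i; case; apply: val_inj.
Qed.

End BlockIndexing.

Section RowIndexing.
Variables (R : realType) (N : nat).
Implicit Type y : 'rV[R]_N.

Lemma rv_nthE y (t : 'I_N) : rv_nth y t = y 0 t.
Proof. by rewrite /rv_nth valK. Qed.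

Lemma rv_nthD y1 y2 t : rv_nth (y1 + y2) t = rv_nth y1 t + rv_nth y2 t.
Proof. by rewrite /rv_nth; case: insub => [o|]; rewrite ?mxE ?addr0. Qed.

Lemma rv_nthZ c y t : rv_nth (c *: y) t = c * rv_nth y t.
Proof. by rewrite /rv_nth; case: insub => [o|]; rewrite ?mxE ?mulr0. Qed.

Lemma rv_nth_mxrow (f : nat -> R) t : (t < N)%N -> rv_nth (\row_(s < N) f s) t = f t.
Proof. by move=> ltn_tN; rewrite /rv_nth insubT mxE. Qed.

Lemma rv_nth_row_mxr n1 (x : 'rV[R]_n1) y t :
  (t < N)%N -> rv_nth (row_mx x y) (n1 + t) = rv_nth y t.
Proof.
move=> ltn_tN; have lt : (n1 + t < n1 + N)%N by rewrite ltn_add2l.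
rewrite /rv_nth !insubT /=.
have -> : Sub (n1 + t) lt = rshift n1 (Ordinal ltn_tN) by apply: val_inj.
by rewrite row_mxEr.
Qed.

Lemma dot_block_row y a v (c : nat -> int) : (a + v <= N)%N ->
  \sum_(t < N) ((\row_(t' < N) (if (a <= t' < a + v)%N then c (t' - a)%N else 0)) 0 t)%:~R * y 0 t
  = \sum_(k < v) (c k)%:~R * rv_nth y (a + k).
Proof.
move=> le_avN.
pose F t := ((if (a <= t < a + v)%N then c (t - a)%N else 0)%:~R : R) * rv_nth y t.
have F0 t : ~~ (a <= t < a + v)%N -> F t = 0 by rewrite /F => /negbTE ->; rewrite mul0r.
transitivity (\sum_(0 <= t < N) F t).
  by rewrite big_mkord; apply: eq_bigr => t _; rewrite mxE /F rv_nthE.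
rewrite (@big_cat_nat _ _ _ a 0 N) ?(leq_trans (leq_addr v a)) //=.
rewrite (@big_cat_nat _ _ _ (a + v) a N) ?leq_addr //=.
rewrite big_nat_cond big1 ?add0r => [|t /andP[/andP[_ lt_ta] _]]; last first.
  by rewrite F0 //; lia.
rewrite [X in _ + X]big_nat_cond [X in _ + X]big1 ?addr0 => [|t /andP[/andP[le_avt _] _]];
  last by rewrite F0 //; lia.
rewrite -{1}(add0n a) big_addn addKn big_mkord; apply: eq_bigr => k _.
by rewrite /F addnC leq_addr ltn_add2l ltn_ord /= addKn.
Qed.

End RowIndexing.

Section Polyhedron.
Variables (R : realType) (n m l : nat) (hl : (l <= n)%N).
Variables (A : 'M[rat]_(m, n)) (b : 'cV[rat]_m) (u : 'I_l -> nat).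

Lemma polyP_convex : is_convex (@Defs.polyP R n m l hl A b u).
Proof.
move=> x1 x2 t /andP[t0 t1] [Ax1 box1] [Ax2 box2]; have t1' : 0 <= 1 - t by lra.
split => [r|i].
- have -> : \sum_(j < n) ratr (A r j) * (t *: x1 + (1 - t) *: x2) 0 j =
     t * \sum_(j < n) ratr (A r j) * x1 0 j + (1 - t) * \sum_(j < n) ratr (A r j) * x2 0 j.
    rewrite !mulr_sumr -big_split; apply: eq_bigr => j _; rewrite !mxE /=; ring.
  have := ler_wpM2l t0 (Ax1 r); have := ler_wpM2l t1' (Ax2 r); lra.
- have /andP[lo1 hi1] := box1 i; have /andP[lo2 hi2] := box2 i; rewrite !mxE.
  have := mulr_ge0 t0 lo1; have := mulr_ge0 t1' lo2.
  have := ler_wpM2l t0 hi1; have := ler_wpM2l t1' hi2.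
  by move=> *; apply/andP; split; lra.
Qed.

Lemma polyPI_coord (x : 'rV[R]_n) (i : 'I_l) : polyPI hl A b u x ->
  exists j : nat, (j <= u i)%N /\ x 0 (widen_ord hl i) = j%:R.
Proof.
move=> [[_ box] x_int]; have [z Ez] := x_int i; have /andP[lo hi] := box i.
case: z Ez => [j|j] Ez; last by move: lo; rewrite Ez ler0z.
by exists j => //; rewrite -(ler_nat R); move: hi; rewrite Ez.
Qed.

End Polyhedron.

(* Keeps the index argument of the family [B] explicit. *)
Unset Implicit Arguments.
Section BinarizedPolyhedron.
Variables (R : realType) (n m l : nat) (hl : (l <= n)%N).
Variables (A : 'M[rat]_(m, n)) (b : 'cV[rat]_m) (u : 'I_l -> nat).
Variable B : forall i : 'I_l, set 'rV[R]_(1 + u i).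
Hypothesis B_unimodular : forall i, unimodular (B i).

Local Notation NN := (n + \sum_(i < l) u i)%N.
Local Notation PB := (@polyPB R n m l hl A b u B).
Local Notation J := (@IB n l u).

Definition wvec i := projT1 (cid (unimodular_vertices (B_unimodular i))).

Lemma B_vertices i : B i = conv (range (vertex (wvec i))).
Proof. by case: (projT2 (cid (unimodular_vertices (B_unimodular i)))). Qed.

Lemma wvec_unimodular i : \det (edge_mx (wvec i)) = 1 \/ \det (edge_mx (wvec i)) = -1.
Proof. by case: (projT2 (cid (unimodular_vertices (B_unimodular i)))). Qed.

Definition xi (y : 'rV[R]_NN) i := lsubmx y 0 (widen_ord hl i).

Definition block_point i (y : 'rV[R]_NN) := pt (xi y i) (zblock u n y i).

Definition lambda i y j := bary (wvec i) (block_point i y) j.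

Lemma lambdaE i y j : lambda i y j = \sum_(k < u i)
  (bary_mx (wvec i) k j)%:~R * (rv_nth y (n + offset u i + k) - (wvec i ord0 0 k)%:~R).
Proof. by rewrite /lambda /bary /block_point /pt row_mxKr; apply: eq_bigr => k _; rewrite mxE. Qed.

Lemma affine_lambda i j : affine (lambda i ^~ j).
Proof.
apply: (eq_affine (fun y => esym (lambdaE i y j))).
apply: affine_sum => k; apply/affineMl/affineB; [exact: affine_rv_nth | exact: affine_cst].
Qed.

Lemma lambda_ge0 i y j : PB y -> 0 <= lambda i y j.
Proof.
by move=> [_ /(_ i)]; rewrite B_vertices => Bpt; apply: (bary_ge0 (wvec_unimodular i) j Bpt).
Qed.

Lemma lambda_sum_le1 i y : PB y -> \sum_(j < u i) lambda i y j <= 1.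
Proof. by move=> [_ /(_ i)]; rewrite B_vertices => /(bary_sum_le1 (wvec_unimodular i)). Qed.

Lemma xi_lambda i y : PB y -> xi y i = \sum_(j < u i) (j.+1)%:R * lambda i y j.
Proof.
move=> [_ /(_ i)]; rewrite B_vertices => /(xcoord_bary (wvec_unimodular i)) <-.
by rewrite /xcoord /block_point /pt row_mxKl mxE.
Qed.

(* On [window a c], the value [xi y i = \sum_j j.+1 * lambda i y j] is confined to
   [a i, c i]: the weights outside that range vanish, and for [0 < a i] the
   weight of the vertex [x = 0] vanishes too. *)
Definition window (a c : 'I_l -> nat) : set 'rV[R]_NN :=
  [set y | PB y /\ forall i,
     (forall j : 'I_(u i), (j.+1 < a i)%N \/ (c i < j.+1)%N -> lambda i y j = 0) /\
     ((0 < a i)%N -> \sum_(j < u i) lambda i y j = 1)].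

Lemma window_sub a c : window a c `<=` PB.
Proof. by move=> y []. Qed.

Definition proj_hull : set 'rV[R]_NN := [set y | conv (polyPI hl A b u) (lsubmx y)].

Lemma proj_hull_convex : is_convex proj_hull.
Proof.
by move=> y1 y2 t t01 H1 H2; rewrite /proj_hull /= linearD !linearZ; apply: conv_convex.
Qed.

Lemma window_point_sub a c : (forall i, a i = c i) -> window a c `<=` proj_hull.
Proof.
move=> eq_ac y [PBy win]; apply: sub_conv; split; first by case: PBy.
move=> i; exists (a i)%:Z; have [out_0 sum_1] := win i.
rewrite -[LHS]/(xi y i) xi_lambda //.
under eq_bigr => j _ do
  (have -> : (j.+1)%:R * lambda i y j = (a i)%:R * lambda i y j
     by case: (eqVneq j.+1 (a i)) => [-> //|ne]; rewrite out_0 ?mulr0 // -eq_ac; lia).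
rewrite -mulr_sumr; case: (posnP (a i)) => [->|a_pos]; first by rewrite mul0r.
by rewrite sum_1 // mulr1.
Qed.

Definition lambda_range i lo hi y := \sum_(j : 'I_(u i) | (lo <= j < hi)%N) lambda i y j.

Lemma affine_Lam_range i lo hi : affine (lambda_range i lo hi).
Proof. by apply: affine_sum => j; apply: affine_lambda. Qed.

Lemma Lam_range_ge0 i lo hi y : PB y -> 0 <= lambda_range i lo hi y.
Proof. by move=> PBy; apply: sumr_ge0 => j _; apply: lambda_ge0. Qed.

Lemma Lam_range_le1 i lo hi y : PB y -> 0 <= 1 - lambda_range i lo hi y.
Proof.
move=> PBy; rewrite subr_ge0; apply: le_trans (lambda_sum_le1 i y PBy).
rewrite [leRHS](bigID (fun j : 'I_(u i) => (lo <= j < hi)%N)) /= lerDl.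
by apply: sumr_ge0 => j _; apply: lambda_ge0.
Qed.

Lemma Lam_range_split i lo hi : exists (pi : 'rV[int]_NN) (pi0 : int),
  (forall t, ~ J t -> pi 0 t = 0) /\
  forall y : 'rV[R]_NN, \sum_(t < NN) (pi 0 t)%:~R * y 0 t = lambda_range i lo hi y + pi0%:~R.
Proof.
pose c t := if insub t is Some k then \sum_(j : 'I_(u i) | (lo <= j < hi)%N) bary_mx (wvec i) k j
            else 0.
have cE (k : 'I_(u i)) : c k = \sum_(j : 'I_(u i) | (lo <= j < hi)%N) bary_mx (wvec i) k j.
  by rewrite /c valK.
pose a0 := (n + offset u i)%N.
exists (\row_(t < NN) (if (a0 <= t < a0 + u i)%N then c (t - a0)%N else 0)).
exists (\sum_(k < u i) wvec i ord0 0 k * c k); split.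
  move=> t nJt; rewrite mxE; case: ifP => // /andP[le_a0t _]; exfalso; apply: nJt.
  by right; apply: leq_trans le_a0t; apply: leq_addr.
move=> y; rewrite dot_block_row; last by have := offset_add_le_sum u i; rewrite /a0; lia.
rewrite /lambda_range; under [X in _ = X + _]eq_bigr do rewrite lambdaE.
rewrite exchange_big /= rmorph_sum -big_split /=; apply: eq_bigr => k _.
rewrite cE rmorphM /= !rmorph_sum -mulr_suml /a0; ring.
Qed.

Lemma window_lower_face a c i0 lo :
  window a c `&` [set y | lambda_range i0 lo (c i0) y = 0] `<=`
  window a [eta c with i0 |-> lo].
Proof.
move=> y [[PBy win] /= range0]; split=> // i.
case: (eqVneq i i0) => [->|ne]; last by rewrite /= (negbTE ne); apply: win.
have [out_0 sum_1] := win i0; split=> // j; rewrite /= eqxx => out_j.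
case: (ltnP (c i0) j.+1) => [lt|le]; first by apply: out_0; right.
case: out_j => lt; first by apply: out_0; left.
apply: (psumr_eq0P (fun j _ => lambda_ge0 i0 y j PBy) range0).
by apply/andP; split; lia.
Qed.

Lemma window_upper_face a c i0 lo :
  window a c `&` [set y | 1 - lambda_range i0 lo (c i0) y = 0] `<=`
  window [eta a with i0 |-> lo.+1] c.
Proof.
move=> y [[PBy win] /= range1]; split=> // i.
case: (eqVneq i i0) => [->|ne]; last by rewrite /= (negbTE ne); apply: win.
have [out_0 _] := win i0.
set P := fun j : 'I_(u i0) => (lo <= j < c i0)%N.
have rest0 : \sum_(j < u i0 | ~~ P j) lambda i0 y j = 0.
  have := lambda_sum_le1 i0 y PBy; rewrite (bigID P) /= -/(lambda_range _ _ _ _).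
  have : 0 <= \sum_(j < u i0 | ~~ P j) lambda i0 y j.
    by apply: sumr_ge0 => j _; apply: lambda_ge0.
  lra.
split=> [j|_]; rewrite /= ?eqxx.
- move=> out_j; case: (ltnP (c i0) j.+1) => [lt|le]; first by apply: out_0; right.
  case: out_j => lt; last by lia.
  apply: (psumr_eq0P (fun j _ => lambda_ge0 i0 y j PBy) rest0).
  by rewrite /P negb_and -ltnNge; apply/orP; left; lia.
- by rewrite (bigID P) /= rest0 addr0 -[LHS]/(lambda_range i0 lo (c i0) y); lra.
Qed.

Lemma SCk_window_split k (G : set 'rV[R]_NN) a c i0 lo : is_convex G ->
  SCk k (window a [eta c with i0 |-> lo]) J `<=` G ->
  SCk k (window [eta a with i0 |-> lo.+1] c) J `<=` G ->
  SCk k.+1 (window a c) J `<=` G.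
Proof.
move=> G_convex lower_sub upper_sub y SCy.
set f := lambda_range i0 lo (c i0).
have f_ge0 p : window a c p -> 0 <= f p by move/window_sub; apply: Lam_range_ge0.
have f_le1 p : window a c p -> 0 <= 1 - f p by move/window_sub; apply: Lam_range_le1.
have affine_1f : affine (fun p => 1 - f p).
  by apply: affineB; [exact: affine_cst | exact: affine_Lam_range].
have [pi [pi0 [Jpi pi_f]]] := Lam_range_split i0 lo (c i0).
apply: (conv_sub_convex G_convex _ (SCy pi pi0 Jpi)) => y' [SCy' y'_notin].
have y'_hull := SCk_sub_conv SCy'.
(* outside the split set, the functional [f] with values in [0, 1] is 0 or 1 *)
have [f0|f1] : f y' = 0 \/ 1 - f y' = 0.
  have f_ge0' := affine_ge0_conv (affine_Lam_range i0 lo (c i0)) f_ge0 y'_hull.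
  have f_le1' := affine_ge0_conv affine_1f f_le1 y'_hull.
  have [|f_neq0] := eqVneq (f y') 0; first by left.
  have [f_eq1|f_neq1] := eqVneq (f y') 1; first by right; lra.
  have f_gt0 : 0 < f y' by rewrite lt_def f_neq0.
  have f_lt1 : f y' < 1 by rewrite lt_def eq_sym f_neq1 /=; lra.
  by exfalso; apply: y'_notin; rewrite /split_set /= pi_f -/f intrD rmorph1; split; lra.
- apply/lower_sub/(SCk_subset (@window_lower_face a c i0 lo)).
  by apply: SCk_face => //; apply: affine_Lam_range.
- apply/upper_sub/(SCk_subset (@window_upper_face a c i0 lo)).
  exact: SCk_face.
Qed.

Lemma SCk_window_sub k : forall a c e : 'I_l -> nat,
  (forall i, a i <= c i)%N -> (forall i, c i - a i < 2 ^ e i)%N -> (\sum_i e i <= k)%N ->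
  SCk k (window a c) J `<=` proj_hull.
Proof.
elim: k => [|k IH] a c e le_ac width budget.
  apply: window_point_sub => i.
  have : (e i <= 0)%N by apply: leq_trans budget; rewrite (bigD1 i) //= leq_addr.
  by rewrite leqn0 => /eqP e0; have := width i; have := le_ac i; rewrite e0 expn0; lia.
have [[i0 lt_ac0]|eq_ac] := pselect (exists i, a i < c i)%N; last first.
  apply: SCk_sub_convex proj_hull_convex (window_point_sub a c _) => i.
  by have := le_ac i; have /negP := eq_ac (ex_intro _ i _); lia.
have e0_pos : (0 < e i0)%N by case: (posnP (e i0)) => e0 //; have := width i0; rewrite e0; lia.
have [e1 e_i0] : exists e1, e i0 = e1.+1 by exists (e i0).-1; rewrite prednK.
have pow_e0 : (2 ^ e i0 = 2 * 2 ^ e1)%N by rewrite e_i0 expnS.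
set e' := [eta e with i0 |-> e1].
have budget' : (\sum_i e' i <= k)%N by rewrite -(leq_add2r (e i0)) sum_eta_update; lia.
pose mid := ((a i0 + c i0) %/ 2)%N.
apply: (SCk_window_split k proj_hull a c i0 mid proj_hull_convex);
  apply: (IH _ _ e') => // i /=; case: eqP => [->|_]; rewrite ?le_ac ?width //;
  by have := width i0; rewrite /mid; lia.
Qed.

Lemma proj_SCk_sub_hull k : (\sum_(i < l) up_log 2 (u i).+1 <= k)%N ->
  [set lsubmx y | y in SCk k PB J] `<=` conv (polyPI hl A b u).
Proof.
move=> budget _ [y SCy <-].
suff : proj_hull y by [].
apply: (SCk_window_sub k (fun=> 0%N) u (fun i => up_log 2 (u i).+1)) => // [i|].
  by have := up_logP (u i).+1 (isT : (1 < 2)%N); rewrite subn0.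
apply: SCk_subset SCy => z PBz; split=> // i; split=> // j.
by case=> //; have := ltn_ord j; lia.
Qed.

Lemma block_point_comb i (y1 y2 : 'rV[R]_NN) t s :
  block_point i (t *: y1 + s *: y2) = t *: block_point i y1 + s *: block_point i y2.
Proof.
rewrite /block_point /pt !scale_row_mx add_row_mx.
by congr row_mx; apply/rowP => k; rewrite /xi !mxE ?rv_nthD ?rv_nthZ.
Qed.

Lemma PB_convex : is_convex PB.
Proof.
move=> y1 y2 t t01 [Py1 By1] [Py2 By2]; split => [|i].
- by rewrite linearD !linearZ; apply: polyP_convex.
- rewrite -[B i _]/(B i (block_point i _)) block_point_comb B_vertices.
  by apply: conv_convex => //; rewrite -B_vertices; [exact: By1 | exact: By2].
Qed.

Lemma lift_integral_point x : polyPI hl A b u x ->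
  exists y : 'rV[R]_NN, [/\ lsubmx y = x, PB y & forall t, J t -> y 0 t \is a Num.int].
Proof.
move=> PIx; have [j j_spec] := choice (fun i => polyPI_coord i PIx).
have le_ju i : (j i <= u i)%N by case: (j_spec i).
have x_j i : x 0 (widen_ord hl i) = (j i)%:R by case: (j_spec i).
pose v i := wvec i (inord (j i)).
pose z : 'rV[R]_(\sum_(i < l) u i) := \row_t (concat_blocks v t)%:~R.
exists (row_mx x z); split; [by rewrite row_mxKl | split => [|i] | move=> t Jt].
- by rewrite row_mxKl; case: PIx.
- rewrite -[B i _]/(B i (block_point i _)) B_vertices; apply: sub_conv.
  exists (inord (j i)) => //; rewrite /vertex /block_point /xi row_mxKl x_j inordK ?ltnS //.
  congr pt; apply/rowP => k.
  have lt_k : (offset u i + k < \sum_(i < l) u i)%N.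
    by have := offset_add_le_sum u i; have := ltn_ord k; lia.
  rewrite !mxE -addnA rv_nth_row_mxr // /z.
  by rewrite (rv_nth_mxrow (fun t => (concat_blocks v t)%:~R)) // concat_blocksE.
- case: (splitP t) => [t' Et|t' Et].
    have -> : t = lshift _ t' by apply: val_inj.
    rewrite row_mxEl; case: Jt => [lt_tl|]; last by rewrite Et; have := ltn_ord t'; lia.
    have lt_t'l : (t' < l)%N by rewrite -Et.
    have -> : t' = widen_ord hl (Ordinal lt_t'l) by apply: val_inj.
    by rewrite x_j rpred_nat.
  have -> : t = rshift _ t' by apply: val_inj.
  by rewrite row_mxEr mxE intr_int.
Qed.

Lemma hull_sub_proj_SCk k : conv (polyPI hl A b u) `<=` [set lsubmx y | y in SCk k PB J].
Proof.
move=> _ [k' [p [lam [PIp lam_ge0 lam_sum ->]]]].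
have [Y Y_spec] := choice (fun i => lift_integral_point (p i) (PIp i)).
exists (\sum_(i < k') lam i *: Y i).
  apply: (conv_sub_convex (X := SCk k PB J) (SCk_convex (J := J) (k := k) PB_convex)) => //.
  exists k', Y, lam; split => // i; have [_ PBY Y_int] := Y_spec i.
  exact: int_in_SCk.
rewrite linear_sum; apply: eq_bigr => i _.
by have [<- _ _] := Y_spec i; rewrite linearZ.
Qed.

End BinarizedPolyhedron.

Theorem corollary3 (R : realType) (n m l : nat) (hl : (l <= n)%N)
  (A : 'M[rat]_(m, n)) (b : 'cV[rat]_m) (u : 'I_l -> nat)
  (B : forall i : 'I_l, set 'rV[R]_(1 + u i)) :
  (forall i, (0 < u i)%N) ->
  (forall i, unimodular (B i)) ->
  let q := (\sum_(i < l) up_log 2 (u i).+1)%N in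
  [set lsubmx y | y in SCk q (@polyPB R n m l hl A b u B) (@IB n l u)]
    = conv (polyPI hl A b u).
Proof.
move=> _ B_unimodular q; apply/seteqP; split.
- exact: proj_SCk_sub_hull.
- exact: hull_sub_proj_SCk.
Qed.
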